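(* Let $\mathcal{X}_1,\mathcal{X}_2$ be non-empty sets, $\mathcal{B}_i\subseteq\mathcal{P}(\mathcal{X}_i)\setminus\{\emptyset\}$ for $i\in\{1,2\}$, and for each $i\in\{1,2\}$ let $\mathcal{B}'_i\supseteq\mathcal{B}_i$ be a set each of whose elements is a finite disjoint union of events in $\mathcal{B}_i$. Let $\mathcal{D}_i$ be a coherent set of desirable gambles on $\mathcal{X}_i$ and $\underline{P}_i$ a coherent conditional lower prevision on $\mathcal{C}_i\subseteq\mathcal{C}(\mathcal{X}_i)$, $i\in\{1,2\}$. Then the set $\mathcal{D}_1\otimes\mathcal{D}_2$ constructed from $(\mathcal{B}_1,\mathcal{B}_2)$ equals the one constructed from $(\mathcal{B}'_1,\mathcal{B}'_2)$, and likewise $\underline{P}_1\otimes\underline{P}_2$ constructed from $(\mathcal{B}_1,\mathcal{B}_2)$ equals the one constructed from $(\mathcal{B}'_1,\mathcal{B}'_2)$.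
   Context: Gambles on a non-empty set $\mathcal{X}$ are bounded real functions; $\mathcal{G}(\mathcal{X})$ is the set of gambles, $\mathcal{G}_{>0}(\mathcal{X})$ the non-negative non-zero gambles, $\mathbb{I}_A$ the indicator of $A$. For $\mathcal{A}\subseteq\mathcal{G}(\mathcal{X})$: $\mathrm{posi}(\mathcal{A}):=\{\sum_{i=1}^n\lambda_if_i\colon n\in\mathbb{N},\lambda_i>0,f_i\in\mathcal{A}\}$, $\mathcal{E}(\mathcal{A}):=\mathrm{posi}(\mathcal{A}\cup\mathcal{G}_{>0}(\mathcal{X}))$. A coherent set of desirable gambles $\mathcal{D}\subseteq\mathcal{G}(\mathcal{X})$ satisfies: (D1) $f\geq0,f\neq0\Rightarrow f\in\mathcal{D}$; (D2) $f\in\mathcal{D},\lambda>0\Rightarrow\lambda f\in\mathcal{D}$; (D3) $f,g\in\mathcal{D}\Rightarrow f+g\in\mathcal{D}$; (D4) $f\leq0\Rightarrow f\notin\mathcal{D}$. $\mathcal{C}(\mathcal{X}):=\mathcal{G}(\mathcal{X})\times(\mathcal{P}(\mathcal{X})\setminus\{\emptyset\})$; a conditional lower prevision on $\mathcal{C}\subseteq\mathcal{C}(\mathcal{X})$ is a map $(f,B)\mapsto\underline{P}(f\vert B)\in\mathbb{R}\cup\{\pm\infty\}$. For $\mathcal{D}\subseteq\mathcal{G}(\mathcal{X})$, $\underline{P}_{\mathcal{D}}(f\vert B):=\sup\{\mu\in\mathbb{R}\colon[f-\mu]\mathbb{I}_B\in\mathcal{D}\}$. $\underline{P}$ is coherent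 if $\underline{P}=\underline{P}_{\mathcal{D}}$ on its domain for some coherent set of desirable gambles $\mathcal{D}$. For coherent $\underline{P}$ on $\mathcal{C}$, $\mathcal{E}(\underline{P}):=\mathcal{E}(\{[f-\mu]\mathbb{I}_B\colon(f,B)\in\mathcal{C},\mu<\underline{P}(f\vert B)\})$. Gambles on $\mathcal{X}_i$ are identified with their cylindrical extensions to $\mathcal{X}_1\times\mathcal{X}_2$, events $B\subseteq\mathcal{X}_1$ with $B\times\mathcal{X}_2$ (similarly for $\mathcal{X}_2$). Given sets of conditioning events $\mathcal{B}_1,\mathcal{B}_2$: $\mathcal{D}_1\otimes\mathcal{D}_2:=\mathcal{E}(\mathcal{A}_{1\to2}\cup\mathcal{A}_{2\to1})$, with $\mathcal{A}_{1\to2}:=\{f_2(X_2)\mathbb{I}_{B_1}(X_1)\colon f_2\in\mathcal{D}_2,B_1\in\mathcal{B}_1\cup\{\mathcal{X}_1\}\}$ and $\mathcal{A}_{2\to1}:=\{f_1(X_1)\mathbb{I}_{B_2}(X_2)\colon f_1\in\mathcal{D}_1,B_2\in\mathcal{B}_2\cup\{\mathcal{X}_2\}\}$; and $(\underline{P}_1\otimes\underline{P}_2)(f\vert B):=\underline{P}_{\mathcal{D}}(f\vert B)$ for $(f,B)\in\mathcal{C}(\mathcal{X}_1\times\mathcal{X}_2)$ with $\mathcal{D}=\mathcal{E}(\underline{P}_1)\otimes\mathcal{E}(\underline{P}_2)$. *)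

From Stdlib Require Import Reals List ClassicalDescription.
From Coquelicot Require Import Coquelicot.
Set Implicit Arguments.
Open Scope R_scope.

Definition gamble {X : Type} (f : X -> R) : Prop :=
  exists M : R, forall x, Rabs (f x) <= M.

Definition gpos {X : Type} (f : X -> R) : Prop :=
  gamble f /\ (forall x, 0 <= f x) /\ (exists x, f x <> 0).

Definition indic {X : Type} (B : X -> Prop) (x : X) : R :=
  if excluded_middle_informative (B x) then 1 else 0.

Definition posi {X : Type} (A : (X -> R) -> Prop) (g : X -> R) : Prop :=
  exists l : list (R * (X -> R)),
    l <> nil /\
    List.Forall (fun p => 0 < fst p /\ A (snd p)) l /\
    forall x, g x = fold_right (fun p s => fst p * snd p x + s) 0 l.

Definition natext {X : Type} (A : (X -> R) -> Prop) : (X -> R) -> Prop :=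
  posi (fun f => A f \/ gpos f).

Definition coherent_D {X : Type} (D : (X -> R) -> Prop) : Prop :=
  (forall f, D f -> gamble f) /\
  (forall f, gamble f -> (forall x, 0 <= f x) -> (exists x, f x <> 0) -> D f) /\
  (forall f l, D f -> 0 < l -> D (fun x => l * f x)) /\
  (forall f g, D f -> D g -> D (fun x => f x + g x)) /\
  (forall f, gamble f -> (forall x, f x <= 0) -> ~ D f).

Definition condg {X : Type} (f : X -> R) (mu : R) (B : X -> Prop) : X -> R :=
  fun x => (f x - mu) * indic B x.

Definition domain_ok {X : Type} (C : (X -> R) -> (X -> Prop) -> Prop) : Prop :=
  forall f B, C f B -> gamble f /\ exists x, B x.

(* P_D(f|B) := sup { mu ∈ R : [f - mu] I_B ∈ D }  (sup ∅ = -∞). *)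
Definition lowprev_of {X : Type} (D : (X -> R) -> Prop)
  (f : X -> R) (B : X -> Prop) : Rbar :=
  Lub_Rbar (fun mu => D (condg f mu B)).

Definition coherent_P {X : Type} (C : (X -> R) -> (X -> Prop) -> Prop)
  (P : (X -> R) -> (X -> Prop) -> Rbar) : Prop :=
  domain_ok C /\
  exists D, coherent_D D /\ forall f B, C f B -> P f B = lowprev_of D f B.

Definition natext_P {X : Type} (C : (X -> R) -> (X -> Prop) -> Prop)
  (P : (X -> R) -> (X -> Prop) -> Rbar) : (X -> R) -> Prop :=
  natext (fun g => exists f B mu, C f B /\ Rbar_lt (Finite mu) (P f B) /\
                                  g = condg f mu B).

Definition cyl1 {X1 X2 : Type} (f : X1 -> R) : X1 * X2 -> R := fun p => f (fst p).
Definition cyl2 {X1 X2 : Type} (f : X2 -> R) : X1 * X2 -> R := fun p => f (snd p).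

Definition A12 {X1 X2 : Type} (B1 : (X1 -> Prop) -> Prop) (D2 : (X2 -> R) -> Prop)
  (g : X1 * X2 -> R) : Prop :=
  exists f2 E1, D2 f2 /\ (B1 E1 \/ E1 = (fun _ => True)) /\
    g = (fun p => f2 (snd p) * indic E1 (fst p)).

Definition A21 {X1 X2 : Type} (B2 : (X2 -> Prop) -> Prop) (D1 : (X1 -> R) -> Prop)
  (g : X1 * X2 -> R) : Prop :=
  exists f1 E2, D1 f1 /\ (B2 E2 \/ E2 = (fun _ => True)) /\
    g = (fun p => f1 (fst p) * indic E2 (snd p)).

Definition prodD {X1 X2 : Type} (B1 : (X1 -> Prop) -> Prop) (B2 : (X2 -> Prop) -> Prop)
  (D1 : (X1 -> R) -> Prop) (D2 : (X2 -> R) -> Prop) : (X1 * X2 -> R) -> Prop :=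
  natext (fun g => A12 B1 D2 g \/ A21 B2 D1 g).

Definition prodP {X1 X2 : Type} (B1 : (X1 -> Prop) -> Prop) (B2 : (X2 -> Prop) -> Prop)
  (C1 : (X1 -> R) -> (X1 -> Prop) -> Prop) (P1 : (X1 -> R) -> (X1 -> Prop) -> Rbar)
  (C2 : (X2 -> R) -> (X2 -> Prop) -> Prop) (P2 : (X2 -> R) -> (X2 -> Prop) -> Rbar)
  (f : X1 * X2 -> R) (B : X1 * X2 -> Prop) : Rbar :=
  lowprev_of (prodD B1 B2 (natext_P C1 P1) (natext_P C2 P2)) f B.

Definition fin_disj_union {X : Type} (Bf : (X -> Prop) -> Prop) (A : X -> Prop) : Prop :=
  exists (n : nat) (Bs : nat -> X -> Prop),
    (0 < n)%nat /\
    (forall k, (k < n)%nat -> Bf (Bs k)) /\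
    (forall i j, (i < n)%nat -> (j < n)%nat -> i <> j -> forall x, ~ (Bs i x /\ Bs j x)) /\
    (forall x, A x <-> exists k, (k < n)%nat /\ Bs k x).

(* Every generator [f2 (X2) I_{B1'} (X1)] with [B1' = B_1 ⊎ ... ⊎ B_n] equals the sum
   [f2 (X2) I_{B_1} (X1) + ... + f2 (X2) I_{B_n} (X1)] of generators for the family
   [B1], and symmetrically for [X2]. Hence the two generating sets have the same
   positive hull, so the two products of sets of desirable gambles coincide, and so
   do the lower previsions they induce. *)

From Stdlib Require Import Reals.
From Coquelicot Require Import Coquelicot.
From Stdlib Require Import List Lra Lia FunctionalExtensionality PropExtensionality
  ClassicalDescription.

Definition lincomb {Z : Type} (l : list (R * (Z -> R))) (x : Z) : R :=
  fold_right (fun p s => fst p * snd p x + s) 0 l.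

Lemma lincomb_app {Z : Type} (a b : list (R * (Z -> R))) x :
  lincomb (a ++ b) x = lincomb a x + lincomb b x.
Proof. induction a as [|p a IH]; unfold lincomb in *; simpl; [lra|]. rewrite IH; lra. Qed.

Lemma lincomb_scale {Z : Type} c (a : list (R * (Z -> R))) x :
  lincomb (map (fun q => (c * fst q, snd q)) a) x = c * lincomb a x.
Proof. induction a as [|p a IH]; unfold lincomb in *; simpl; [lra|]. rewrite IH; lra. Qed.

Section PositiveHull.

Context {Z : Type}.

Lemma posi_monotone (A A' : (Z -> R) -> Prop) g :
  (forall h, A h -> A' h) -> posi A g -> posi A' g.
Proof.
  intros HAA' [l [Hnil [Hl Hg]]]. exists l; repeat split; auto.
  eapply Forall_impl; [|exact Hl]. simpl; intros p [? ?]; auto.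
Qed.

Lemma posi_of_mem (A : (Z -> R) -> Prop) g : A g -> posi A g.
Proof.
  intros Hg. exists ((1, g) :: nil). repeat split; [discriminate| |].
  - repeat constructor; simpl; [lra|exact Hg].
  - intros x; simpl; lra.
Qed.

Lemma posi_posi (A A' : (Z -> R) -> Prop) g :
  (forall h, A h -> posi A' h) -> posi A g -> posi A' g.
Proof.
  intros HAA' [l [Hnil [Hl Hg]]].
  assert (Hexp : exists l', Forall (fun p => 0 < fst p /\ A' (snd p)) l' /\
     (l <> nil -> l' <> nil) /\ forall x, lincomb l x = lincomb l' x).
  { clear Hnil Hg. induction l as [|[c h] l IH].
    - exists nil; repeat split; auto.
    - inversion Hl as [|? ? [Hc Hh] Hl']; subst; simpl in Hc, Hh.
      destruct (IH Hl') as [l' [Hl'' [_ Hsum]]].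
      destruct (HAA' h Hh) as [lh [Hlh_nil [Hlh Hh_eq]]].
      exists (map (fun q => (c * fst q, snd q)) lh ++ l'). repeat split.
      + apply Forall_app; split; [|exact Hl''].
        apply Forall_map. eapply Forall_impl; [|exact Hlh].
        simpl; intros q [? ?]; split; [apply Rmult_lt_0_compat|]; auto.
      + intros _. destruct lh; [congruence|discriminate].
      + intros x. rewrite lincomb_app, lincomb_scale, <- Hsum.
        unfold lincomb at 1; simpl. rewrite Hh_eq. reflexivity. }
  destruct Hexp as [l' [Hl' [Hnil' Hsum]]]. exists l'. repeat split; auto.
  intros x. rewrite Hg. apply Hsum.
Qed.

Lemma natext_eq (A A' : (Z -> R) -> Prop) :
  (forall g, A g -> A' g) -> (forall g, A' g -> natext A g) -> natext A = natext A'.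
Proof.
  intros HAA' HA'A. apply functional_extensionality; intros g.
  apply propositional_extensionality; split.
  - apply posi_monotone. intros h [Hh|Hh]; auto.
  - apply posi_posi. intros h [Hh|Hh]; [exact (HA'A h Hh)|apply posi_of_mem; auto].
Qed.

End PositiveHull.

Lemma indic_ext {Y : Type} (E E' : Y -> Prop) y :
  (forall y, E y <-> E' y) -> indic E y = indic E' y.
Proof.
  intros HE. unfold indic.
  destruct (excluded_middle_informative (E y)) as [a|a];
  destruct (excluded_middle_informative (E' y)) as [b|b]; auto;
  exfalso; [apply b|apply a]; apply HE; auto.
Qed.

Lemma indic_disjoint_union {Y : Type} (E E' : Y -> Prop) y :
  (forall y, ~ (E y /\ E' y)) -> indic (fun y => E y \/ E' y) y = indic E y + indic E' y.
Proof.
  intros Hdisj. unfold indic.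
  destruct (excluded_middle_informative (E y)) as [a|a];
  destruct (excluded_middle_informative (E' y)) as [b|b];
  destruct (excluded_middle_informative (E y \/ E' y)) as [c|c];
  try lra; try tauto. exfalso; exact (Hdisj y (conj a b)).
Qed.

Section DisjointUnion.

Context {Z Y : Type} (u : Z -> R) (v : Z -> Y).

Fixpoint pieces (Bs : nat -> Y -> Prop) (m : nat) : list (R * (Z -> R)) :=
  match m with
  | O => nil
  | S m => (1, fun z => u z * indic (Bs m) (v z)) :: pieces Bs m
  end.

Lemma lincomb_pieces Bs n z :
  (forall i j, (i < n)%nat -> (j < n)%nat -> i <> j -> forall y, ~ (Bs i y /\ Bs j y)) ->
  lincomb (pieces Bs n) z = u z * indic (fun y => exists k, (k < n)%nat /\ Bs k y) (v z).
Proof.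
  intros Hdisj. induction n as [|m IH].
  - unfold lincomb, indic; simpl.
    destruct excluded_middle_informative as [[k [Hk _]]|]; [lia|lra].
  - change (lincomb (pieces Bs (S m)) z) with
      (1 * (u z * indic (Bs m) (v z)) + lincomb (pieces Bs m) z).
    rewrite IH by (intros; apply Hdisj; lia).
    rewrite (indic_ext (fun y => exists k, (k < S m)%nat /\ Bs k y)
                      (fun y => Bs m y \/ exists k, (k < m)%nat /\ Bs k y)).
    + rewrite indic_disjoint_union; [ring|].
      intros y [Hm [k [Hk Hky]]].
      exact (Hdisj k m ltac:(lia) ltac:(lia) ltac:(lia) y (conj Hky Hm)).
    + intros y; split.
      * intros [k [Hk Hky]]. destruct (Nat.eq_dec k m) as [->|Hkm]; auto.
        right; exists k; split; [lia|auto].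
      * intros [Hm|[k [Hk Hky]]]; [exists m|exists k]; split; auto; lia.
Qed.

Lemma posi_fin_disj_union (P : (Z -> R) -> Prop) (Bf : (Y -> Prop) -> Prop) E :
  (forall B, Bf B -> P (fun z => u z * indic B (v z))) -> fin_disj_union Bf E ->
  posi P (fun z => u z * indic E (v z)).
Proof.
  intros HP [n [Bs [Hn [HBs [Hdisj HE]]]]]. exists (pieces Bs n). repeat split.
  - destruct n; [lia|discriminate].
  - assert (Hpieces : forall m, (m <= n)%nat ->
              Forall (fun p => 0 < fst p /\ P (snd p)) (pieces Bs m)).
    { induction m as [|m IH]; intros Hm; simpl; constructor.
      - simpl; split; [lra|apply HP, HBs; lia].
      - apply IH; lia. }
    apply Hpieces; lia.
  - intros z. change (fold_right _ 0 _) with (lincomb (pieces Bs n) z).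
    rewrite lincomb_pieces by exact Hdisj. f_equal. apply indic_ext.
    intros y; apply HE.
Qed.

End DisjointUnion.

Section Refinement.

Context {X1 X2 : Type} {B1 B1' : (X1 -> Prop) -> Prop} {B2 B2' : (X2 -> Prop) -> Prop}.

Lemma A12_refine (D2 : (X2 -> R) -> Prop) g :
  (forall E, B1' E -> fin_disj_union B1 E) -> A12 B1' D2 g -> posi (A12 B1 D2) g.
Proof.
  intros HB1' [f2 [E1 [Hf2 [[HE1|HE1] ->]]]].
  - apply (posi_fin_disj_union (fun p => f2 (snd p)) fst) with B1; auto.
    intros B HB. exists f2, B; auto.
  - apply posi_of_mem. exists f2, E1; auto.
Qed.

Lemma A21_refine (D1 : (X1 -> R) -> Prop) g :
  (forall E, B2' E -> fin_disj_union B2 E) -> A21 B2' D1 g -> posi (A21 B2 D1) g.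
Proof.
  intros HB2' [f1 [E2 [Hf1 [[HE2|HE2] ->]]]].
  - apply (posi_fin_disj_union (fun p => f1 (fst p)) snd) with B2; auto.
    intros B HB. exists f1, B; auto.
  - apply posi_of_mem. exists f1, E2; auto.
Qed.

Hypotheses (hB1sub : forall E, B1 E -> B1' E) (hB2sub : forall E, B2 E -> B2' E)
  (hB1' : forall E, B1' E -> fin_disj_union B1 E)
  (hB2' : forall E, B2' E -> fin_disj_union B2 E).

Lemma prodD_refine (D1 : (X1 -> R) -> Prop) (D2 : (X2 -> R) -> Prop) :
  prodD B1 B2 D1 D2 = prodD B1' B2' D1 D2.
Proof.
  apply natext_eq.
  - intros g [[f2 [E1 [Hf2 [HE1 Hg]]]]|[f1 [E2 [Hf1 [HE2 Hg]]]]].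
    + left; exists f2, E1; intuition.
    + right; exists f1, E2; intuition.
  - intros g [Hg|Hg].
    + apply posi_monotone with (A12 B1 D2); [auto|exact (A12_refine _ _ hB1' Hg)].
    + apply posi_monotone with (A21 B2 D1); [auto|exact (A21_refine _ _ hB2' Hg)].
Qed.

End Refinement.

Theorem proposition20
  (X1 X2 : Type) (x1 : X1) (x2 : X2)
  (B1 B1' : (X1 -> Prop) -> Prop) (B2 B2' : (X2 -> Prop) -> Prop)
  (hB1 : forall E, B1 E -> exists x, E x)
  (hB2 : forall E, B2 E -> exists x, E x)
  (hB1sub : forall E, B1 E -> B1' E)
  (hB2sub : forall E, B2 E -> B2' E)
  (hB1' : forall E, B1' E -> fin_disj_union B1 E)
  (hB2' : forall E, B2' E -> fin_disj_union B2 E)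
  (D1 : (X1 -> R) -> Prop) (D2 : (X2 -> R) -> Prop)
  (hD1 : coherent_D D1) (hD2 : coherent_D D2)
  (C1 : (X1 -> R) -> (X1 -> Prop) -> Prop) (P1 : (X1 -> R) -> (X1 -> Prop) -> Rbar)
  (C2 : (X2 -> R) -> (X2 -> Prop) -> Prop) (P2 : (X2 -> R) -> (X2 -> Prop) -> Rbar)
  (hP1 : coherent_P C1 P1) (hP2 : coherent_P C2 P2) :
  prodD B1 B2 D1 D2 = prodD B1' B2' D1 D2 /\
  (forall (f : X1 * X2 -> R) (B : X1 * X2 -> Prop),
     gamble f -> (exists p, B p) ->
     prodP B1 B2 C1 P1 C2 P2 f B = prodP B1' B2' C1 P1 C2 P2 f B).
Proof.
  split.
  - exact (prodD_refine hB1sub hB2sub hB1' hB2' D1 D2).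
  - intros f B _ _. unfold prodP.
    rewrite (prodD_refine hB1sub hB2sub hB1' hB2'). reflexivity.
Qed.
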